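(* Let $\hat\rho$ be a two-mode Gaussian state with zero first moments and covariance matrix in the standard form $\gamma=\begin{pmatrix}\lambda_a I_2 & C\\ C^T&\lambda_b I_2\end{pmatrix}$, $C=\mathrm{diag}(c_x,-c_p)$, with $c_x\ge|c_p|$ and $\lambda_a\lambda_b>c_x^2$. Then $$Q(\hat\rho)=\frac{2}{\pi}\arctan\!\Big(\frac{c_x}{\sqrt{\lambda_a\lambda_b-c_x^2}}\Big),$$ the supremum being attained at $\theta=\varphi=0$. In particular, for a two-mode squeezed vacuum ($\lambda_a=\lambda_b=\cosh 2r$, $c_x=c_p=\sinh 2r$, $r\ge 0$), $Q=\frac{2}{\pi}\arctan(\sinh 2r)$.
   Context: Covariance matrix convention: $\gamma_{ij}=\mathrm{tr}[\hat\rho\{\hat R_i-d_i,\hat R_j-d_j\}]$ with $\hat R=(\hat x_A,\hat p_A,\hat x_B,\hat p_B)$, $[\hat x_j,\hat p_j]=i$, so the vacuum has $\gamma=I$. For angles $\theta,\varphi$ let $\hat x_A^\theta=\cos\theta\,\hat x_A+\sin\theta\,\hat p_A$, $\hat x_B^\varphi=\cos\varphi\,\hat x_B+\sin\varphi\,\hat p_B$, and $f^{\hat\rho}_{\theta,\varphi}(u,v)$ the joint density of their outcomes. For $u,v\ge0$, $S(u,v)=f(u,v)+f(-u,-v)+f(u,-v)+f(-u,v)$, $D(u,v)=f(u,v)+f(-u,-v)-f(u,-v)-f(-u,v)$, $\mathcal B_{\theta,\varphi}=|D|/S$ (0 where $S=0$), and $Q(\hat\rho)=\sup_{\theta,\varphi}\int\!\!\int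 f^{\hat\rho}_{\theta,\varphi}(u,v)\mathcal B_{\theta,\varphi}(|u|,|v|)\,du\,dv$. *)

From Stdlib Require Import Reals Lra.
Open Scope R_scope.

(* A real 4x4 matrix, indexed by 0..3 in the order (x_A, p_A, x_B, p_B). *)
Definition mat4 := nat -> nat -> R.

(* Standard-form covariance matrix
   [[la I, C],[C^T, lb I]] with C = diag(cx, -cp). *)
Definition gamma_std (la lb cx cp : R) : mat4 := fun i j =>
  match i, j with
  | 0%nat, 0%nat => la | 1%nat, 1%nat => la
  | 2%nat, 2%nat => lb | 3%nat, 3%nat => lb
  | 0%nat, 2%nat => cx | 2%nat, 0%nat => cx
  | 1%nat, 3%nat => - cp | 3%nat, 1%nat => - cp
  | _, _ => 0
  end.

(* Coefficient vectors of the quadratures x_A^theta and x_B^phi in R. *)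
Definition vA (th : R) (i : nat) : R :=
  match i with 0%nat => cos th | 1%nat => sin th | _ => 0 end.
Definition vB (ph : R) (i : nat) : R :=
  match i with 2%nat => cos ph | 3%nat => sin ph | _ => 0 end.

Definition bil (g : mat4) (w w' : nat -> R) : R :=
  sum_f_R0 (fun i => sum_f_R0 (fun j => w i * g i j * w' j) 3) 3.

(* Since gamma_ij = <{R_i - d_i, R_j - d_j}> = 2 Cov, the classical covariance
   matrix of the quadrature outcomes (x_A^theta, x_B^phi) is (1/2) L gamma L^T. *)
Definition s11 (g : mat4) th := bil g (vA th) (vA th) / 2.
Definition s22 (g : mat4) ph := bil g (vB ph) (vB ph) / 2.
Definition s12 (g : mat4) th ph := bil g (vA th) (vB ph) / 2.

(* Joint density f_{theta,phi}(u,v) of the homodyne outcomes of a Gaussian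
   state with zero first moments and covariance matrix g: centred bivariate
   normal density with covariance [[s11, s12],[s12, s22]]. *)
Definition fdens (g : mat4) (th ph : R) (u v : R) : R :=
  let a := s11 g th in let b := s22 g ph in let c := s12 g th ph in
  let det := a * b - c * c in
  / (2 * PI * sqrt det) * exp (- (b * u * u - 2 * c * u * v + a * v * v) / (2 * det)).

Definition Sfun (f : R -> R -> R) (u v : R) : R :=
  f u v + f (- u) (- v) + f u (- v) + f (- u) v.
Definition Dfun (f : R -> R -> R) (u v : R) : R :=
  f u v + f (- u) (- v) - f u (- v) - f (- u) v.
Definition Bfun (f : R -> R -> R) (u v : R) : R :=
  if Req_EM_T (Sfun f u v) 0 then 0 else Rabs (Dfun f u v) / Sfun f u v.

Definition Qintegrand (g : mat4) (th ph : R) (u v : R) : R :=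
  fdens g th ph u v * Bfun (fdens g th ph) (Rabs u) (Rabs v).

Definition is_RInt (f : R -> R) (a b I : R) : Prop :=
  exists pr : Riemann_integrable f a b, RiemannInt pr = I.

Definition is_integral_R (f : R -> R) (I : R) : Prop :=
  forall eps, 0 < eps -> exists M, forall a b, a <= - M -> M <= b ->
    exists J, is_RInt f a b J /\ Rabs (J - I) < eps.

(* Integral over R^2 (as an iterated improper integral; the integrand used
   below is nonnegative and continuous, so this agrees with the Lebesgue
   double integral by Tonelli). *)
Definition is_integral_R2 (g : R -> R -> R) (I : R) : Prop :=
  exists h : R -> R,
    (forall u, is_integral_R (fun v => g u v) (h u)) /\ is_integral_R h I.

Definition is_Q (g : mat4) (q : R) : Prop :=
  is_lub (fun I => exists th ph, is_integral_R2 (Qintegrand g th ph) I) q.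

(* The homodyne outcomes (x_A^theta, x_B^phi) of the state form a centred bivariate normal
   vector; for the standard form its variances are la/2, lb/2 and its covariance is
   c = (cx cos theta cos phi - cp sin theta sin phi)/2, with |c| <= cx/2.  For such a density f,
   S and D factor through cosh and sinh of c u v / det, so B(|u|,|v|) = tanh(|c u v| / det).
   Adding the integrand at v and -v turns cosh * tanh into sinh, i.e. a difference of two
   Gaussians shifted by +-|c||u|/a (a the variance of u), so the v-integral is a Gaussian
   mass over an interval of half-length proportional to |u|.  Differentiating the remaining u-integral with respect to
   that slope leaves a Lorentzian, whose integral is (2/pi) atan(|c| / sqrt det).  This value
   increases with |c|, and |c| = cx/2 is attained at theta = phi = 0. *)

From Pilot Require Import Defs.
From Stdlib Require Import Reals Lra FunctionalExtensionality.
From Coquelicot Require Import Coquelicot.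
Open Scope R_scope.

Lemma continuous_of_ex_derive (f : R -> R) x : ex_derive f x -> continuous f x.
Proof. apply (@ex_derive_continuous R_AbsRing R_NormedModule). Qed.

Lemma ex_RInt_of_continuous (f : R -> R) a b : (forall x, continuous f x) -> ex_RInt f a b.
Proof. intros Hf. apply (@ex_RInt_continuous R_CompleteNormedModule). intros; apply Hf. Qed.

Lemma continuous_mult_R (f g : R -> R) x :
  continuous f x -> continuous g x -> continuous (fun y => f y * g y) x.
Proof. apply (@continuous_mult R_UniformSpace R_AbsRing). Qed.

Lemma continuous_comp_R (f g : R -> R) x :
  continuous f x -> continuous g (f x) -> continuous (fun y => g (f y)) x.
Proof. apply (@continuous_comp R_UniformSpace R_UniformSpace R_UniformSpace). Qed.

Lemma continuous_const_R (k x : R) : continuous (fun _ : R => k) x.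
Proof. apply (@continuous_const R_UniformSpace R_UniformSpace). Qed.

Lemma RInt_const_R (k a b : R) : RInt (fun _ => k) a b = (b - a) * k.
Proof. rewrite RInt_const. reflexivity. Qed.

Section RInt_continuous.

Variable f : R -> R.
Hypothesis f_cont : forall x, continuous f x.

Let f_ex a b : ex_RInt f a b := ex_RInt_of_continuous f a b f_cont.

Lemma is_RInt_Reals_RInt a b : Defs.is_RInt f a b (RInt f a b).
Proof. exists (ex_RInt_Reals_0 _ _ _ (f_ex a b)). symmetry. apply RInt_Reals. Qed.

Lemma RInt_Chasles3 a b c d : RInt f a d = RInt f a b + RInt f b c + RInt f c d.
Proof.
  rewrite <- (@RInt_Chasles R_CompleteNormedModule f a c d) by apply f_ex.
  rewrite <- (@RInt_Chasles R_CompleteNormedModule f a b c) by apply f_ex.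
  reflexivity.
Qed.

Lemma Rabs_RInt_le a b : a <= b -> Rabs (RInt f a b) <= RInt (fun x => Rabs (f x)) a b.
Proof.
  intros Hab. now apply abs_RInt_le.
Qed.

Lemma continuous_comp_opp x : continuous (fun y => f (- y)) x.
Proof.
  apply (continuous_comp_R Ropp f); auto.
  apply continuous_of_ex_derive. auto_derive. auto.
Qed.

Lemma RInt_comp_opp a b : RInt (fun x => f (- x)) a b = RInt f (- b) (- a).
Proof.
  assert (E := @RInt_comp_lin R_CompleteNormedModule f (-1) 0 a b (f_ex _ _)).
  replace (-1 * a + 0) with (- a) in E by ring. replace (-1 * b + 0) with (- b) in E by ring.
  rewrite <- (opp_RInt_swap f (- a) (- b)), <- E by apply f_ex.
  rewrite (RInt_ext (fun y => scal (-1) (f (-1 * y + 0))) (fun y => opp (f (- y)))).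
  - rewrite (@RInt_opp R_CompleteNormedModule) by
      apply ex_RInt_of_continuous, continuous_comp_opp.
    now rewrite opp_opp.
  - intros x _. unfold scal, opp; simpl; unfold mult; simpl.
    replace (-1 * x + 0) with (- x) by ring. ring.
Qed.

Lemma RInt_symmetric M : RInt f (- M) M = RInt (fun x => f x + f (- x)) 0 M.
Proof.
  rewrite <- (@RInt_Chasles R_CompleteNormedModule f (- M) 0 M) by apply f_ex.
  rewrite (@RInt_plus R_CompleteNormedModule) by
    (apply ex_RInt_of_continuous; auto using continuous_comp_opp).
  rewrite RInt_comp_opp, Ropp_0. unfold plus; simpl. ring.
Qed.

Lemma RInt_comp_shift s a b : RInt (fun x => f (x + s)) a b = RInt f (a + s) (b + s).
Proof.
  assert (E := @RInt_comp_lin R_CompleteNormedModule f 1 s a b (f_ex _ _)).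
  replace (1 * a + s) with (a + s) in E by ring. replace (1 * b + s) with (b + s) in E by ring.
  rewrite <- E. apply RInt_ext. intros x _. unfold scal; simpl; unfold mult; simpl.
  rewrite Rmult_1_l. f_equal. ring.
Qed.

Lemma RInt_scal_R k a b : RInt (fun x => k * f x) a b = k * RInt f a b.
Proof. apply (@RInt_scal R_CompleteNormedModule), f_ex. Qed.

Lemma RInt_even M : (forall x, f (- x) = f x) -> RInt f (- M) M = 2 * RInt f 0 M.
Proof.
  intros Hf. rewrite RInt_symmetric, <- RInt_scal_R.
  apply RInt_ext. intros x _. rewrite Hf. simpl. lra.
Qed.

Lemma RInt_minus_R (g : R -> R) a b : (forall x, continuous g x) ->
  RInt (fun x => f x - g x) a b = RInt f a b - RInt g a b.
Proof. intros Hg. apply (@RInt_minus R_CompleteNormedModule); auto using ex_RInt_of_continuous. Qed.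

Lemma RInt_le_R (g : R -> R) a b : a <= b -> (forall x, continuous g x) ->
  (forall x, a < x < b -> f x <= g x) -> RInt f a b <= RInt g a b.
Proof. intros Hab Hg H. apply RInt_le; auto using ex_RInt_of_continuous. Qed.

Lemma RInt_bounds_R lo hi a b : a <= b -> (forall x, a < x < b -> lo <= f x <= hi) ->
  (b - a) * lo <= RInt f a b <= (b - a) * hi.
Proof.
  intros Hab H. rewrite <- !RInt_const_R.
  split; apply RInt_le; auto using ex_RInt_of_continuous, continuous_const_R; intros; now apply H.
Qed.

End RInt_continuous.

Lemma is_integral_R_of_tail_rate (F : R -> R) I M0 C :
  (forall x, continuous F x) ->
  (forall M, M0 < M ->
     Rabs (RInt F (- M) M - I) <= C / (M - M0) /\
     forall Y, M <= Y -> RInt (fun x => Rabs (F x)) M Y <= C / (M - M0) /\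
                         RInt (fun x => Rabs (F x)) (- Y) (- M) <= C / (M - M0)) ->
  is_integral_R F I.
Proof.
  intros HF H eps Heps.
  set (M := Rmax M0 0 + 4 * Rabs C / eps + 1).
  assert (HM0 : M0 <= Rmax M0 0 /\ 0 <= Rmax M0 0) by (split; [apply Rmax_l | apply Rmax_r]).
  assert (HC : 0 <= 4 * Rabs C / eps)
    by (apply Rmult_le_pos; [pose proof (Rabs_pos C); lra | left; apply Rinv_0_lt_compat; lra]).
  assert (Hrate : C / (M - M0) <= eps / 4).
  { assert (HMM : 0 < M - M0) by (unfold M; lra).
    apply (Rmult_le_reg_r (M - M0)); auto. unfold Rdiv at 1.
    rewrite Rmult_assoc, Rinv_l, Rmult_1_r by lra.
    assert (E : eps / 4 * (M - M0) = Rabs C + eps / 4 * (Rmax M0 0 - M0 + 1))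
      by (unfold M; field; lra).
    assert (0 <= eps / 4 * (Rmax M0 0 - M0 + 1)) by (apply Rmult_le_pos; lra).
    rewrite E. pose proof (Rle_abs C). lra. }
  destruct (H M) as [Hmid Htail]; [unfold M; lra |].
  exists M. intros a b Ha Hb. exists (RInt F a b). split; [now apply is_RInt_Reals_RInt |].
  rewrite (RInt_Chasles3 F HF a (- M) M b).
  destruct (Htail b Hb) as [Hb1 _]. destruct (Htail (- a)) as [_ Ha1]; [lra |].
  rewrite Ropp_involutive in Ha1.
  pose proof (Rabs_RInt_le F HF M b Hb). pose proof (Rabs_RInt_le F HF a (- M) Ha).
  revert Hmid Hb1 Ha1 H0 H1.
  generalize (RInt F a (- M)) (RInt F (- M) M) (RInt F M b).
  intros x y z. unfold Rabs. repeat destruct Rcase_abs; lra.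
Qed.

Lemma is_integral_R_unique F I1 I2 : is_integral_R F I1 -> is_integral_R F I2 -> I1 = I2.
Proof.
  intros H1 H2. destruct (Req_dec I1 I2) as [E|E]; auto. exfalso.
  set (eps := Rabs (I1 - I2) / 2).
  assert (He : 0 < eps) by (unfold eps; apply Rdiv_lt_0_compat; [apply Rabs_pos_lt; lra | lra]).
  destruct (H1 eps He) as [M1 HM1]. destruct (H2 eps He) as [M2 HM2].
  set (M := Rmax (Rmax M1 M2) 0).
  assert (A1 : M1 <= M) by (unfold M; eapply Rle_trans; [apply Rmax_l | apply Rmax_l]).
  assert (A2 : M2 <= M) by (unfold M; eapply Rle_trans; [apply Rmax_r | apply Rmax_l]).
  destruct (HM1 (- M) M ltac:(lra) ltac:(lra)) as [J1 [[p1 E1] B1]].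
  destruct (HM2 (- M) M ltac:(lra) ltac:(lra)) as [J2 [[p2 E2] B2]].
  assert (EJ : J2 = J1) by (rewrite <- E1, <- E2; apply RiemannInt_P5). rewrite EJ in B2.
  assert (Rabs (I1 - I2) <= Rabs (J1 - I1) + Rabs (J1 - I2)).
  { replace (I1 - I2) with (- (J1 - I1) + (J1 - I2)) by ring.
    eapply Rle_trans; [apply Rabs_triang |]. rewrite Rabs_Ropp. lra. }
  unfold eps in *. lra.
Qed.

Lemma is_integral_R2_unique g I1 I2 : is_integral_R2 g I1 -> is_integral_R2 g I2 -> I1 = I2.
Proof.
  intros [h1 [Hh1 H1]] [h2 [Hh2 H2]].
  assert (h1 = h2) by (apply functional_extensionality; intros u; eapply is_integral_R_unique; eauto).
  subst. eapply is_integral_R_unique; eauto.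
Qed.

Lemma exp_opp_le_inv y : 0 < y -> exp (- y) <= / y.
Proof.
  intros Hy. rewrite exp_Ropp. apply Rinv_le_contravar; auto.
  pose proof (exp_ineq1 y (Rgt_not_eq y 0 Hy)). lra.
Qed.

Definition gauss (al x : R) := exp (- (al * (x * x))).

Lemma gauss_pos al x : 0 < gauss al x.
Proof. apply exp_pos. Qed.

Lemma gauss_opp al x : gauss al (- x) = gauss al x.
Proof. unfold gauss. f_equal. ring. Qed.

Lemma gauss_0 al : gauss al 0 = 1.
Proof. unfold gauss. rewrite Rmult_0_r, Rmult_0_r, Ropp_0. apply exp_0. Qed.

Lemma gauss_le_gauss al al' x : al <= al' -> gauss al' x <= gauss al x.
Proof.
  intros H. unfold gauss. destruct (Req_dec ((al' - al) * (x * x)) 0) as [E|E].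
  - right. f_equal. f_equal. lra.
  - left. apply exp_increasing.
    assert (0 < (al' - al) * (x * x)) by (pose proof (Rle_0_sqr x); unfold Rsqr in *; nra).
    lra.
Qed.

Lemma gauss_le_1 al x : 0 <= al -> gauss al x <= 1.
Proof.
  intros. replace 1 with (gauss 0 x) by (unfold gauss; rewrite Rmult_0_l, Ropp_0; apply exp_0).
  now apply gauss_le_gauss.
Qed.

Lemma gauss_le_rate al M : 0 < al -> 1 < M -> gauss al M <= / al / (M - 1).
Proof.
  intros Hal HM. unfold gauss.
  eapply Rle_trans; [apply exp_opp_le_inv; apply Rmult_lt_0_compat; nra |].
  unfold Rdiv. rewrite <- Rinv_mult.
  apply Rinv_le_contravar; [apply Rmult_lt_0_compat; lra | apply Rmult_le_compat_l; nra].
Qed.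

Lemma continuous_gauss_shift al q x : continuous (fun v => gauss al (v - q)) x.
Proof. apply continuous_of_ex_derive. unfold gauss. auto_derive. auto. Qed.

Lemma continuous_gauss al x : continuous (gauss al) x.
Proof. apply continuous_of_ex_derive. unfold gauss. auto_derive. auto. Qed.

Lemma RInt_gauss_bounds al a b : 0 <= al -> a <= b -> 0 <= RInt (gauss al) a b <= b - a.
Proof.
  intros Hal H. rewrite <- (Rmult_0_r (b - a)). rewrite <- (Rmult_1_r (b - a)) at 2.
  apply RInt_bounds_R; auto using continuous_gauss.
  intros. split; [left; apply gauss_pos | now apply gauss_le_1].
Qed.

(* The tail is dominated by the primitive [-1/(al (v - q))] of [1/(al (v - q)^2)]. *)
Lemma RInt_gauss_tail al q M Y : 0 < al -> Rabs q < M -> M <= Y ->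
  RInt (fun v => gauss al (v - q)) M Y <= / (al * (M - Rabs q)).
Proof.
  intros Hal Hq HMY.
  assert (HMq : 0 < M - q) by (pose proof (Rle_abs q); lra).
  assert (Hpos : forall x, M <= x -> 0 < al * ((x - q) * (x - q)))
    by (intros x Hx; apply Rmult_lt_0_compat; nra).
  assert (Hder : forall x, Rmin M Y <= x <= Rmax M Y ->
      is_derive (fun v => - / (al * (v - q))) x (/ (al * ((x - q) * (x - q))))
      /\ continuous (fun v => / (al * ((v - q) * (v - q)))) x).
  { intros x Hx. rewrite Rmin_left, Rmax_right in Hx by lra.
    specialize (Hpos x ltac:(lra)). split.
    - auto_derive; [nra |]. field. nra.
    - apply continuous_of_ex_derive. auto_derive. lra. }
  apply Rle_trans with (RInt (fun v => / (al * ((v - q) * (v - q)))) M Y).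
  - apply RInt_le; auto.
    + apply ex_RInt_of_continuous, continuous_gauss_shift.
    + apply (@ex_RInt_continuous R_CompleteNormedModule). intros; now apply Hder.
    + intros x Hx. apply exp_opp_le_inv, Hpos. lra.
  - rewrite (is_RInt_unique _ _ _ _ (@is_RInt_derive R_CompleteNormedModule _ _ M Y
      (fun x Hx => proj1 (Hder x Hx)) (fun x Hx => proj2 (Hder x Hx)))).
    unfold minus, plus, opp; simpl.
    assert (0 < / (al * (Y - q))) by (apply Rinv_0_lt_compat, Rmult_lt_0_compat; lra).
    assert (/ (al * (M - q)) <= / (al * (M - Rabs q))).
    { apply Rinv_le_contravar; [apply Rmult_lt_0_compat; lra |].
      apply Rmult_le_compat_l; [lra |]. pose proof (Rle_abs q); lra. }
    lra.
Qed.

Lemma RInt_gauss_tail_0 al M Y : 0 < al -> 0 < M -> M <= Y ->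
  RInt (gauss al) M Y <= / (al * M).
Proof.
  intros. rewrite (RInt_ext _ (fun v => gauss al (v - 0))) by (intros; f_equal; ring).
  replace M with (M - Rabs 0) at 2 by (rewrite Rabs_R0; ring).
  apply RInt_gauss_tail; auto. rewrite Rabs_R0; lra.
Qed.

Lemma RInt_gauss_sym al p : RInt (gauss al) (- p) p = 2 * RInt (gauss al) 0 p.
Proof. apply RInt_even; [apply continuous_gauss | apply gauss_opp]. Qed.

Lemma RInt_id_mul_gauss al M Y : 0 < al ->
  RInt (fun u => u * gauss al u) M Y = (gauss al M - gauss al Y) / (2 * al).
Proof.
  intros Hal.
  assert (Hd : forall x, is_derive (fun u => - gauss al u / (2 * al)) x (x * gauss al x))
    by (intros; unfold gauss; auto_derive; [lra | field; lra]).
  assert (Hc : forall x, continuous (fun u => u * gauss al u) x)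
    by (intros; apply continuous_of_ex_derive; unfold gauss; auto_derive; auto).
  rewrite (is_RInt_unique _ _ _ _ (@is_RInt_derive R_CompleteNormedModule _ _ M Y
    (fun x _ => Hd x) (fun x _ => Hc x))).
  unfold minus, plus, opp; simpl. field. lra.
Qed.

Section Gauss_RInt_param.

Variables A B : R.
Hypotheses (A_pos : 0 < A) (B_nonneg : 0 <= B).

Let gauss_RInt (z t : R) := gauss A t * RInt (gauss B) 0 (z * t).

Let is_derive_gauss_RInt z t :
  is_derive (fun z => gauss_RInt z t) z (t * gauss (A + B * (z * z)) t).
Proof.
  unfold gauss_RInt, gauss. auto_derive.
  - split; [apply ex_RInt_of_continuous, continuous_gauss |].
    split; [| easy]. apply filter_forall. intros x.
    apply continuity_pt_filterlim, continuous_gauss.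
  - replace (- ((A + B * (z * z)) * (t * t)))
      with (- (A * (t * t)) + - (B * (z * t * (z * t)))) by ring.
    rewrite exp_plus. ring.
Qed.

Let continuous_gauss_RInt z t : continuous (gauss_RInt z) t.
Proof.
  apply continuous_of_ex_derive. unfold gauss_RInt, gauss. auto_derive.
  split; [apply ex_RInt_of_continuous, continuous_gauss |].
  split; [| easy]. apply filter_forall. intros x.
  apply continuity_pt_filterlim, continuous_gauss.
Qed.

Let continuity_2d_moment z t :
  continuity_2d_pt (fun z t => t * gauss (A + B * (z * z)) t) z t.
Proof.
  unfold gauss. apply continuity_2d_pt_mult; [apply continuity_2d_pt_id2 |].
  apply (continuity_1d_2d_pt_comp exp); [apply derivable_continuous_pt, derivable_pt_exp |].
  repeat first [ apply continuity_2d_pt_opp | apply continuity_2d_pt_plus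
               | apply continuity_2d_pt_mult | apply continuity_2d_pt_const
               | apply continuity_2d_pt_id1 | apply continuity_2d_pt_id2 ].
Qed.

Let truncated_lorentzian M s := (1 - gauss (A + B * (s * s)) M) / (2 * (A + B * (s * s))).

Let is_derive_RInt_gauss_RInt M z :
  is_derive (fun z => RInt (gauss_RInt z) 0 M) z (truncated_lorentzian M z).
Proof.
  assert (HP : 0 < A + B * (z * z)) by nra.
  assert (P := is_derive_RInt_param gauss_RInt 0 M z).
  rewrite (RInt_ext _ (fun t => t * gauss (A + B * (z * z)) t)) in P
    by (intros; apply is_derive_unique, is_derive_gauss_RInt).
  rewrite RInt_id_mul_gauss, gauss_0 in P by lra.
  apply P.
  - apply filter_forall. intros x t _. eexists. apply is_derive_gauss_RInt.
  - intros t _. apply (continuity_2d_pt_ext (fun z t => t * gauss (A + B * (z * z)) t)).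
    + intros; symmetry; apply is_derive_unique, is_derive_gauss_RInt.
    + apply continuity_2d_moment.
  - apply filter_forall. intros y. apply ex_RInt_of_continuous, continuous_gauss_RInt.
Qed.

(* Differentiate in [lam]: the derivative of the left side is a Gaussian first moment. *)
Lemma RInt_gauss_mul_RInt_gauss lam M :
  RInt (fun t => gauss A t * RInt (gauss B) 0 (lam * t)) 0 M =
  RInt (fun s => (1 - gauss (A + B * (s * s)) M) / (2 * (A + B * (s * s)))) 0 lam.
Proof.
  assert (Hc : forall s, continuous (truncated_lorentzian M) s).
  { intros s. apply continuous_of_ex_derive. unfold truncated_lorentzian, gauss.
    auto_derive. nra. }
  change (RInt (gauss_RInt lam) 0 M = RInt (truncated_lorentzian M) 0 lam).
  rewrite (is_RInt_unique _ _ _ _ (@is_RInt_derive R_CompleteNormedModule _ _ 0 lam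
    (fun x _ => is_derive_RInt_gauss_RInt M x) (fun x _ => Hc x))).
  rewrite (RInt_ext (gauss_RInt 0) (fun _ => 0)), RInt_const_R.
  - unfold minus, plus, opp; simpl. now rewrite Rmult_0_r, Ropp_0, Rplus_0_r.
  - intros x _. unfold gauss_RInt. rewrite Rmult_0_l, RInt_point. apply Rmult_0_r.
Qed.

End Gauss_RInt_param.

Lemma RInt_lorentzian A k lam : 0 < A -> 0 < k ->
  RInt (fun s => / (2 * (A + A * (k * k) * (s * s)))) 0 lam = atan (k * lam) / (2 * A * k).
Proof.
  intros HA Hk.
  assert (Hd : forall x, is_derive (fun s => atan (k * s) / (2 * A * k)) x
                                   (/ (2 * (A + A * (k * k) * (x * x))))).
  { intros x. auto_derive; [lra |].
    assert (0 < 1 + k * x * (k * x * 1)) by nra. field. repeat split; nra. }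
  assert (Hc : forall x, continuous (fun s => / (2 * (A + A * (k * k) * (s * s)))) x).
  { intros x. apply continuous_of_ex_derive. auto_derive.
    assert (0 <= A * (k * k) * (x * x)) by (apply Rmult_le_pos; nra). lra. }
  rewrite (is_RInt_unique _ _ _ _ (@is_RInt_derive R_CompleteNormedModule _ _ 0 lam
    (fun x _ => Hd x) (fun x _ => Hc x))).
  unfold minus, plus, opp; simpl. rewrite Rmult_0_r, atan_0. field. lra.
Qed.

Lemma lorentzian_gap_bounds A B M s : 0 < A -> 0 <= B ->
  0 <= / (2 * (A + B * (s * s))) - (1 - gauss (A + B * (s * s)) M) / (2 * (A + B * (s * s)))
    <= gauss A M / (2 * A).
Proof.
  intros HA HB.
  assert (Hs : 0 <= B * (s * s)) by (apply Rmult_le_pos; [lra | apply Rle_0_sqr]).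
  replace (/ (2 * (A + B * (s * s))) - (1 - gauss (A + B * (s * s)) M) / (2 * (A + B * (s * s))))
    with (gauss (A + B * (s * s)) M / (2 * (A + B * (s * s)))) by (field; lra).
  assert (gauss (A + B * (s * s)) M <= gauss A M) by (apply gauss_le_gauss; lra).
  pose proof (gauss_pos (A + B * (s * s)) M).
  split; [apply Rdiv_le_0_compat; lra |].
  unfold Rdiv. apply Rmult_le_compat; try lra; [left; apply Rinv_0_lt_compat; lra |].
  apply Rinv_le_contravar; lra.
Qed.

Lemma exp_add_exp_opp_pos t : 0 < exp t + exp (- t).
Proof. pose proof (exp_pos t); pose proof (exp_pos (- t)); lra. Qed.

Lemma tanh_exp t : tanh t = (exp t - exp (- t)) / (exp t + exp (- t)).
Proof. unfold tanh, sinh, cosh. pose proof (exp_add_exp_opp_pos t). field. lra. Qed.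

Lemma tanh_opp t : tanh (- t) = - tanh t.
Proof. rewrite !tanh_exp, Ropp_involutive. pose proof (exp_add_exp_opp_pos t). field. lra. Qed.

Lemma tanh_bounds t : 0 <= t -> 0 <= tanh t <= 1.
Proof.
  intros Ht. rewrite tanh_exp.
  assert (exp (- t) <= exp t) by (destruct Ht; [left; apply exp_increasing | subst; rewrite Ropp_0]; lra).
  pose proof (exp_pos (- t)). pose proof (exp_add_exp_opp_pos t).
  split.
  - unfold Rdiv. apply Rmult_le_pos; [lra | left; apply Rinv_0_lt_compat; lra].
  - apply (Rmult_le_reg_r (exp t + exp (- t))); [lra |].
    unfold Rdiv. rewrite Rmult_assoc, Rinv_l by lra. lra.
Qed.

Lemma Rabs_tanh t : Rabs (tanh t) = tanh (Rabs t).
Proof.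
  unfold Rabs at 2. destruct (Rcase_abs t).
  - rewrite tanh_opp. apply Rabs_left1.
    rewrite <- (Ropp_involutive t), tanh_opp. pose proof (tanh_bounds (- t)). lra.
  - apply Rabs_right, Rle_ge, tanh_bounds. lra.
Qed.

Lemma ex_derive_tanh t : ex_derive tanh t.
Proof. unfold tanh, sinh, cosh. auto_derive. pose proof (exp_add_exp_opp_pos t). lra. Qed.

Lemma cosh_mul_tanh_Rabs t :
  (exp t + exp (- t)) * tanh (Rabs t) = exp (Rabs t) - exp (- Rabs t).
Proof.
  rewrite tanh_exp. pose proof (exp_add_exp_opp_pos (Rabs t)).
  replace (exp t + exp (- t)) with (exp (Rabs t) + exp (- Rabs t))
    by (unfold Rabs; destruct Rcase_abs; rewrite ?Ropp_involutive; ring).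
  field. lra.
Qed.

Definition binormal (a b c u v : R) := / (2 * PI * sqrt (a * b - c * c)) *
  exp (- (b * u * u - 2 * c * u * v + a * v * v) / (2 * (a * b - c * c))).

Lemma fdens_binormal g th ph : fdens g th ph = binormal (s11 g th) (s22 g ph) (s12 g th ph).
Proof. reflexivity. Qed.

Lemma binormal_opp a b c x y : binormal a b c (- x) (- y) = binormal a b c x y.
Proof. unfold binormal. do 3 f_equal. ring. Qed.

Lemma binormal_opp_l a b c x y : binormal a b c (- x) y = binormal a b c x (- y).
Proof. unfold binormal. do 3 f_equal. ring. Qed.

(* [f(u, v) B(|u|, |v|)] for [f = binormal a b c], with [B] already evaluated
   (lemma [binormal_mul_Bfun]). *)
Definition Qdens (a b c u v : R) :=
  binormal a b c u v * tanh (Rabs c * Rabs u * Rabs v / (a * b - c * c)).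

Lemma Qdens_opp_l a b c u v : Qdens a b c (- u) v = Qdens a b c u (- v).
Proof. unfold Qdens. rewrite binormal_opp_l, !Rabs_Ropp. reflexivity. Qed.

Definition Qmarginal (a b c u : R) :=
  / (2 * PI * sqrt (a * b - c * c)) * gauss (/ (2 * a)) u *
  RInt (gauss (a / (2 * (a * b - c * c)))) (- (Rabs c * Rabs u / a)) (Rabs c * Rabs u / a).

Lemma Qmarginal_opp a b c u : Qmarginal a b c (- u) = Qmarginal a b c u.
Proof. unfold Qmarginal. rewrite gauss_opp, Rabs_Ropp. reflexivity. Qed.

Section Binormal.

Variables a b c : R.
Hypotheses (a_pos : 0 < a) (det_pos : c * c < a * b).

Let det := a * b - c * c.
Let K := / (2 * PI * sqrt det).
Let A := / (2 * a).
Let al := a / (2 * det).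

Let det_gt0 : 0 < det.
Proof. unfold det; lra. Qed.

Lemma binormal_norm_pos : 0 < K.
Proof.
  apply Rinv_0_lt_compat, Rmult_lt_0_compat; [pose proof PI_RGT_0; lra |].
  now apply sqrt_lt_R0.
Qed.

Lemma binormal_split x y :
  binormal a b c x y = K * exp (- (b * x * x + a * y * y) / (2 * det)) * exp (c * x * y / det).
Proof.
  unfold binormal, K, det. rewrite (Rmult_assoc (/ _)), <- exp_plus. do 2 f_equal. field. lra.
Qed.

(* Completing the square in [v]. *)
Lemma binormal_gauss u v : binormal a b c u v = K * gauss A u * gauss al (v - c * u / a).
Proof.
  unfold binormal, gauss, K, A, al, det. rewrite (Rmult_assoc (/ _)), <- exp_plus.
  do 2 f_equal. field. split; lra.
Qed.

Lemma Bfun_binormal U V : Bfun (binormal a b c) U V = tanh (Rabs (c * U * V / det)).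
Proof.
  set (t := c * U * V / det).
  set (E := exp (- (b * U * U + a * V * V) / (2 * det))).
  assert (F1 : binormal a b c U V = K * E * exp t) by apply binormal_split.
  assert (F2 : binormal a b c U (- V) = K * E * exp (- t)).
  { rewrite binormal_split. unfold E, t.
    replace (c * U * - V / det) with (- (c * U * V / det)) by (field; lra).
    do 4 f_equal. ring. }
  assert (HK := binormal_norm_pos). assert (HE : 0 < E) by apply exp_pos.
  assert (HKE : 0 < 2 * K * E) by (apply Rmult_lt_0_compat; lra).
  assert (HS : Sfun (binormal a b c) U V = 2 * K * E * (exp t + exp (- t)))
    by (unfold Sfun; rewrite binormal_opp, binormal_opp_l, F1, F2; ring).
  assert (HD : Dfun (binormal a b c) U V = 2 * K * E * (exp t - exp (- t)))
    by (unfold Dfun; rewrite binormal_opp, binormal_opp_l, F1, F2; ring).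
  pose proof (exp_add_exp_opp_pos t).
  unfold Bfun. destruct (Req_EM_T (Sfun (binormal a b c) U V) 0) as [Z|_].
  - rewrite HS in Z. nra.
  - rewrite HS, HD, <- Rabs_tanh, tanh_exp, Rabs_mult, (Rabs_right (2 * K * E)) by lra.
    unfold Rdiv. rewrite Rabs_mult, Rabs_inv, (Rabs_right (exp t + exp (- t))) by lra.
    field. repeat split; lra.
Qed.

Lemma binormal_mul_Bfun u v :
  binormal a b c u v * Bfun (binormal a b c) (Rabs u) (Rabs v) = Qdens a b c u v.
Proof.
  unfold Qdens. rewrite Bfun_binormal. do 3 f_equal.
  unfold Rdiv. rewrite !Rabs_mult, !Rabs_Rabsolu, Rabs_inv, (Rabs_right det) by lra.
  reflexivity.
Qed.

Lemma continuous_Qdens u v : continuous (Qdens a b c u) v.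
Proof.
  apply continuous_mult_R.
  - apply continuous_of_ex_derive. unfold binormal. auto_derive. auto.
  - apply (continuous_comp_R Rabs (fun w => tanh (Rabs c * Rabs u * w / det)));
      [apply continuous_Rabs |].
    apply continuous_of_ex_derive.
    apply (ex_derive_comp tanh (fun w => Rabs c * Rabs u * w / det));
      [apply ex_derive_tanh | auto_derive; lra].
Qed.

Lemma Qdens_bounds u v : 0 <= Qdens a b c u v <= K * gauss al (v - c * u / a).
Proof.
  unfold Qdens. rewrite binormal_gauss. fold det.
  assert (HT : 0 <= tanh (Rabs c * Rabs u * Rabs v / det) <= 1).
  { apply tanh_bounds. apply Rmult_le_pos; [| left; apply Rinv_0_lt_compat; lra].
    repeat apply Rmult_le_pos; apply Rabs_pos. }
  assert (HA : gauss A u <= 1) by (apply gauss_le_1; left; apply Rinv_0_lt_compat; lra).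
  pose proof (gauss_pos A u). pose proof (gauss_pos al (v - c * u / a)).
  pose proof binormal_norm_pos.
  set (G := K * gauss al (v - c * u / a)).
  set (T := gauss A u * tanh (Rabs c * Rabs u * Rabs v / det)).
  replace (K * gauss A u * gauss al (v - c * u / a) * tanh (Rabs c * Rabs u * Rabs v / det))
    with (G * T) by (unfold G, T; ring).
  assert (0 < G) by (apply Rmult_lt_0_compat; lra).
  assert (0 <= T <= 1) by (unfold T; split; nra).
  split; [apply Rmult_le_pos; lra |].
  rewrite <- (Rmult_1_r G) at 2. apply Rmult_le_compat_l; lra.
Qed.

(* Summing over [v] and [-v] turns [cosh * tanh] into [sinh], a difference of two
   exponentials, each of which completes the square into a shifted Gaussian. *)
Lemma Qdens_fold u v : 0 <= v ->
  Qdens a b c u v + Qdens a b c u (- v) =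
  K * gauss A u * (gauss al (v - Rabs c * Rabs u / a) - gauss al (v + Rabs c * Rabs u / a)).
Proof.
  intros Hv. unfold Qdens. fold det. rewrite Rabs_Ropp, !binormal_split.
  set (E := exp (- (b * u * u + a * v * v) / (2 * det))).
  replace (- (b * u * u + a * - v * - v) / (2 * det)) with (- (b * u * u + a * v * v) / (2 * det))
    by (f_equal; ring).
  set (s := c * u * v / det). fold E.
  replace (c * u * - v / det) with (- s) by (unfold s; field; lra).
  assert (Hs : Rabs c * Rabs u * Rabs v / det = Rabs s).
  { unfold s, Rdiv. rewrite !Rabs_mult, Rabs_inv, (Rabs_right det) by lra. reflexivity. }
  rewrite Hs.
  replace (K * E * exp s * tanh (Rabs s) + K * E * exp (- s) * tanh (Rabs s))
    with (K * E * ((exp s + exp (- s)) * tanh (Rabs s))) by ring.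
  rewrite cosh_mul_tanh_Rabs, <- Hs, (Rabs_right v) by lra.
  assert (Hsq : forall x, Rabs x * Rabs x = x * x)
    by (intros x; rewrite <- Rabs_mult; apply Rabs_right; nra).
  assert (Hexp : forall C, C * C = c * c ->
    E * exp (C * Rabs u * v / det) = gauss A u * gauss al (v - C * Rabs u / a)).
  { intros C HC. unfold E, gauss, A, al, det. rewrite <- !exp_plus. f_equal.
    replace (b * u * u) with (b * (Rabs u * Rabs u)) by (rewrite Hsq; ring).
    rewrite <- (Hsq u), <- HC. rewrite <- HC in det_pos. field. split; lra. }
  replace (- (Rabs c * Rabs u * v / det)) with (- Rabs c * Rabs u * v / det) by (field; lra).
  rewrite Rmult_minus_distr_l, !(Rmult_assoc K E), !Hexp by (rewrite ?Rmult_opp_opp; apply Hsq).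
  replace (v - - Rabs c * Rabs u / a) with (v + Rabs c * Rabs u / a) by (field; lra).
  ring.
Qed.

Let p u := Rabs c * Rabs u / a.

Let p_nonneg u : 0 <= p u.
Proof.
  unfold p. apply Rmult_le_pos; [apply Rmult_le_pos; apply Rabs_pos |].
  left; apply Rinv_0_lt_compat; lra.
Qed.

Let al_pos : 0 < al.
Proof. unfold al. apply Rdiv_lt_0_compat; lra. Qed.

Lemma RInt_Qdens_center u M : 0 <= M ->
  Qmarginal a b c u - RInt (Qdens a b c u) (- M) M =
  K * gauss A u * RInt (gauss al) (M - p u) (M + p u).
Proof.
  intros HM. rewrite RInt_symmetric by apply continuous_Qdens.
  rewrite (RInt_ext _ (fun v => K * gauss A u * (gauss al (v + - p u) - gauss al (v + p u)))).
  2:{ intros x Hx. rewrite Rmin_left, Rmax_right in Hx by lra.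
      rewrite Qdens_fold by lra. reflexivity. }
  rewrite RInt_scal_R, RInt_minus_R, !RInt_comp_shift;
    try (intros x; apply continuous_of_ex_derive; unfold gauss; auto_derive; auto).
  rewrite (RInt_Chasles3 _ (continuous_gauss al) (0 + - p u) (p u) (p u) (M + - p u)).
  rewrite (RInt_Chasles3 _ (continuous_gauss al) (0 + p u) (M - p u) (M - p u) (M + p u)).
  rewrite !RInt_point. unfold Qmarginal, zero; simpl. fold det K A al.
  replace (0 + - p u) with (- p u) by ring. replace (M + - p u) with (M - p u) by ring.
  replace (0 + p u) with (p u) by ring. unfold p. ring.
Qed.

Lemma RInt_abs_Qdens_tail u M Y : p u < M -> M <= Y ->
  RInt (fun v => Rabs (Qdens a b c u v)) M Y <= K / al / (M - p u).
Proof.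
  intros HM HY. pose proof binormal_norm_pos.
  assert (Hq : Rabs (c * u / a) = p u).
  { unfold p, Rdiv. rewrite !Rabs_mult, Rabs_inv, (Rabs_right a) by lra. reflexivity. }
  apply Rle_trans with (RInt (fun v => K * gauss al (v - c * u / a)) M Y).
  - apply RInt_le_R; auto.
    + intros; apply continuous_Rabs_comp, continuous_Qdens.
    + intros; apply continuous_mult_R; [apply continuous_const_R | apply continuous_gauss_shift].
    + intros x _. destruct (Qdens_bounds u x). rewrite Rabs_right; lra.
  - rewrite RInt_scal_R by apply continuous_gauss_shift.
    replace (K / al / (M - p u)) with (K * / (al * (M - Rabs (c * u / a))))
      by (rewrite Hq; field; lra).
    apply Rmult_le_compat_l; [lra |]. apply RInt_gauss_tail; lra.
Qed.

Lemma RInt_Qdens_error u M : p u < M ->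
  Rabs (RInt (Qdens a b c u) (- M) M - Qmarginal a b c u) <= K / al / (M - p u).
Proof.
  intros HM. pose proof binormal_norm_pos. pose proof (p_nonneg u).
  rewrite <- Rabs_Ropp, Ropp_minus_distr, RInt_Qdens_center by lra.
  assert (HA : 0 < gauss A u <= 1)
    by (split; [apply gauss_pos | apply gauss_le_1; left; apply Rinv_0_lt_compat; lra]).
  destruct (RInt_gauss_bounds al (M - p u) (M + p u)) as [HI _]; [lra | lra |].
  assert (HT := RInt_gauss_tail_0 al (M - p u) (M + p u) al_pos ltac:(lra) ltac:(lra)).
  rewrite Rabs_right by (apply Rle_ge; repeat apply Rmult_le_pos; lra).
  replace (K / al / (M - p u)) with (K * 1 * / (al * (M - p u))) by (field; lra).
  apply Rmult_le_compat; [apply Rmult_le_pos; lra | lra | apply Rmult_le_compat_l; lra | lra].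
Qed.

Lemma is_integral_R_Qdens u : is_integral_R (Qdens a b c u) (Qmarginal a b c u).
Proof.
  apply (is_integral_R_of_tail_rate _ _ (p u) (K / al)); [apply continuous_Qdens |].
  intros M HM. split; [now apply RInt_Qdens_error | intros Y HY; split].
  - now apply RInt_abs_Qdens_tail.
  - rewrite <- RInt_comp_opp by (intros; apply continuous_Rabs_comp, continuous_Qdens).
    rewrite (RInt_ext _ (fun v => Rabs (Qdens a b c (- u) v)))
      by (intros; now rewrite Qdens_opp_l).
    replace (p u) with (p (- u)) in * by (unfold p; now rewrite Rabs_Ropp).
    now apply RInt_abs_Qdens_tail.
Qed.

Let lam := Rabs c / a.

Let lam_nonneg : 0 <= lam.
Proof. unfold lam. apply Rmult_le_pos; [apply Rabs_pos | left; apply Rinv_0_lt_compat; lra]. Qed.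

Let A_pos : 0 < A.
Proof. unfold A. apply Rinv_0_lt_compat. lra. Qed.

Lemma Qmarginal_of_nonneg u : 0 <= u ->
  Qmarginal a b c u = 2 * K * (gauss A u * RInt (gauss al) 0 (lam * u)).
Proof.
  intros Hu. unfold Qmarginal. fold det K A al.
  rewrite (Rabs_right u), RInt_gauss_sym by lra.
  replace (Rabs c * u / a) with (lam * u) by (unfold lam; field; lra). ring.
Qed.

Lemma continuous_Qmarginal u : continuous (Qmarginal a b c) u.
Proof.
  apply continuous_mult_R.
  - apply continuous_of_ex_derive. unfold gauss. auto_derive. auto.
  - apply (continuous_comp_R (fun u => Rabs c * Rabs u / a)
                             (fun w => RInt (gauss al) (- w) w)).
    + apply (continuous_comp_R Rabs (fun w => Rabs c * w / a)); [apply continuous_Rabs |].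
      apply continuous_of_ex_derive. auto_derive. lra.
    + apply continuous_of_ex_derive. auto_derive.
      split; [apply ex_RInt_of_continuous, continuous_gauss |].
      split; [apply filter_forall; intros; apply continuity_pt_filterlim, continuous_gauss |].
      split; [apply filter_forall; intros; apply continuity_pt_filterlim, continuous_gauss |].
      easy.
Qed.

Lemma RInt_Qmarginal M : 0 <= M ->
  RInt (Qmarginal a b c) (- M) M =
  4 * K * RInt (fun s => (1 - gauss (A + al * (s * s)) M) / (2 * (A + al * (s * s)))) 0 lam.
Proof.
  intros HM. rewrite RInt_even by (apply continuous_Qmarginal || apply Qmarginal_opp).
  rewrite (RInt_ext _ (fun u => 2 * K * (gauss A u * RInt (gauss al) 0 (lam * u)))).
  2:{ intros x Hx. rewrite Rmin_left, Rmax_right in Hx by lra. apply Qmarginal_of_nonneg. lra. }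
  rewrite RInt_scal_R, (RInt_gauss_mul_RInt_gauss A al A_pos (Rlt_le _ _ al_pos)).
  - simpl. ring.
  - intros x. apply continuous_of_ex_derive. unfold gauss. auto_derive.
    split; [apply ex_RInt_of_continuous, continuous_gauss |].
    split; [apply filter_forall; intros; apply continuity_pt_filterlim, continuous_gauss |].
    easy.
Qed.

Lemma RInt_lorentzian_Q :
  4 * K * RInt (fun s => / (2 * (A + al * (s * s)))) 0 lam = 2 / PI * atan (Rabs c / sqrt det).
Proof.
  assert (Hs : 0 < sqrt det) by (apply sqrt_lt_R0; lra).
  assert (Hss : sqrt det * sqrt det = det) by (apply sqrt_sqrt; lra).
  set (k := a / sqrt det).
  assert (Hk : 0 < k) by (unfold k; apply Rdiv_lt_0_compat; lra).
  replace al with (A * (k * k)).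
  2:{ unfold A, al, k. replace (a / sqrt det * (a / sqrt det)) with (a * a / (sqrt det * sqrt det))
        by (field; lra). rewrite Hss. field. split; lra. }
  rewrite RInt_lorentzian by auto.
  replace (k * lam) with (Rabs c / sqrt det) by (unfold k, lam; field; split; lra).
  unfold K, A, k. pose proof PI_RGT_0. field. split; lra.
Qed.

Lemma RInt_Qmarginal_error M : 0 <= M ->
  Rabs (RInt (Qmarginal a b c) (- M) M - 2 / PI * atan (Rabs c / sqrt det))
  <= 2 * K * lam / A * gauss A M.
Proof.
  intros HM. pose proof binormal_norm_pos.
  rewrite RInt_Qmarginal, <- RInt_lorentzian_Q by lra.
  set (lor := fun s => / (2 * (A + al * (s * s)))).
  set (trunc := fun s => (1 - gauss (A + al * (s * s)) M) / (2 * (A + al * (s * s)))).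
  assert (Hc : forall s, continuous lor s /\ continuous trunc s).
  { intros s. split; apply continuous_of_ex_derive; unfold lor, trunc, gauss; auto_derive;
      assert (0 <= al * (s * s)) by (apply Rmult_le_pos; nra); lra. }
  assert (HI := RInt_bounds_R (fun s => lor s - trunc s)
    (fun s => continuous_minus _ _ s (proj1 (Hc s)) (proj2 (Hc s)))
    0 (gauss A M / (2 * A)) 0 lam lam_nonneg
    (fun s _ => lorentzian_gap_bounds A al M s A_pos (Rlt_le _ _ al_pos))).
  rewrite Rminus_0_r, Rmult_0_r, RInt_minus_R in HI by apply Hc.
  rewrite Rabs_minus_sym, <- Rmult_minus_distr_l, Rabs_right
    by (apply Rle_ge, Rmult_le_pos; lra).
  replace (2 * K * lam / A * gauss A M) with (4 * K * (lam * (gauss A M / (2 * A)))) by (field; lra).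
  apply Rmult_le_compat_l; lra.
Qed.

Lemma RInt_abs_Qmarginal_tail M Y : 0 <= M -> M <= Y ->
  RInt (fun u => Rabs (Qmarginal a b c u)) M Y <= 2 * K * lam / A * gauss A M.
Proof.
  intros HM HY. pose proof binormal_norm_pos.
  apply Rle_trans with (RInt (fun u => 2 * K * lam * (u * gauss A u)) M Y).
  - apply RInt_le_R; auto.
    + intros; apply continuous_Rabs_comp, continuous_Qmarginal.
    + intros; apply continuous_of_ex_derive; unfold gauss; auto_derive; auto.
    + intros x Hx. rewrite Qmarginal_of_nonneg by lra.
      destruct (RInt_gauss_bounds al 0 (lam * x)) as [R1 R2]; [lra | nra |].
      pose proof (gauss_pos A x).
      rewrite Rabs_right by (apply Rle_ge; repeat apply Rmult_le_pos; lra).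
      replace (2 * K * lam * (x * gauss A x)) with (2 * K * (gauss A x * (lam * x - 0))) by ring.
      apply Rmult_le_compat_l; [lra |]. apply Rmult_le_compat_l; lra.
  - rewrite RInt_scal_R, RInt_id_mul_gauss by
      (auto || intros; apply continuous_of_ex_derive; unfold gauss; auto_derive; auto).
    replace (2 * K * lam / A * gauss A M) with (2 * K * lam * (2 * gauss A M / (2 * A)))
      by (field; lra).
    apply Rmult_le_compat_l; [apply Rmult_le_pos; lra |].
    unfold Rdiv. apply Rmult_le_compat_r; [left; apply Rinv_0_lt_compat; lra |].
    pose proof (gauss_pos A M). pose proof (gauss_pos A Y). lra.
Qed.

Lemma is_integral_R_Qmarginal :
  is_integral_R (Qmarginal a b c) (2 / PI * atan (Rabs c / sqrt det)).
Proof.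
  assert (HC : 0 <= 2 * K * lam / A).
  { pose proof binormal_norm_pos. apply Rdiv_le_0_compat; [apply Rmult_le_pos |]; lra. }
  apply (is_integral_R_of_tail_rate _ _ 1 (2 * K * lam / A / A)); [apply continuous_Qmarginal |].
  intros M HM.
  assert (Hrate : 2 * K * lam / A * gauss A M <= 2 * K * lam / A / A / (M - 1)).
  { replace (2 * K * lam / A / A / (M - 1)) with (2 * K * lam / A * (/ A / (M - 1)))
      by (field; lra).
    apply Rmult_le_compat_l; [exact HC | now apply gauss_le_rate]. }
  split; [| intros Y HY; split].
  - eapply Rle_trans; [apply RInt_Qmarginal_error; lra | exact Hrate].
  - eapply Rle_trans; [apply RInt_abs_Qmarginal_tail; lra | exact Hrate].
  - rewrite <- RInt_comp_opp by (intros; apply continuous_Rabs_comp, continuous_Qmarginal).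
    rewrite (RInt_ext _ (fun u => Rabs (Qmarginal a b c u))) by (intros; now rewrite Qmarginal_opp).
    eapply Rle_trans; [apply RInt_abs_Qmarginal_tail; lra | exact Hrate].
Qed.

End Binormal.

Lemma is_integral_R2_binormal_Q a b c : 0 < a -> c * c < a * b ->
  is_integral_R2 (fun u v => binormal a b c u v * Bfun (binormal a b c) (Rabs u) (Rabs v))
    (2 / PI * atan (Rabs c / sqrt (a * b - c * c))).
Proof.
  intros Ha Hdet. exists (Qmarginal a b c). split.
  - intros u. rewrite (functional_extensionality _ (Qdens a b c u))
      by (intros; now apply binormal_mul_Bfun).
    now apply is_integral_R_Qdens.
  - now apply is_integral_R_Qmarginal.
Qed.

Lemma s11_gamma_std la lb cx cp th : s11 (gamma_std la lb cx cp) th = la / 2.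
Proof.
  unfold s11, bil. simpl. transitivity (la * (sin th ^ 2 + cos th ^ 2) / 2); [field |].
  now rewrite <- !Rsqr_pow2, sin2_cos2, Rmult_1_r.
Qed.

Lemma s22_gamma_std la lb cx cp ph : s22 (gamma_std la lb cx cp) ph = lb / 2.
Proof.
  unfold s22, bil. simpl. transitivity (lb * (sin ph ^ 2 + cos ph ^ 2) / 2); [field |].
  now rewrite <- !Rsqr_pow2, sin2_cos2, Rmult_1_r.
Qed.

Definition cross_cov cx cp th ph := (cx * (cos th * cos ph) - cp * (sin th * sin ph)) / 2.

Lemma s12_gamma_std la lb cx cp th ph :
  s12 (gamma_std la lb cx cp) th ph = cross_cov cx cp th ph.
Proof. unfold s12, bil, cross_cov. simpl. field. Qed.

Lemma Qintegrand_gamma_std la lb cx cp th ph :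
  Qintegrand (gamma_std la lb cx cp) th ph =
  (fun u v => binormal (la / 2) (lb / 2) (cross_cov cx cp th ph) u v *
     Bfun (binormal (la / 2) (lb / 2) (cross_cov cx cp th ph)) (Rabs u) (Rabs v)).
Proof.
  unfold Qintegrand. rewrite fdens_binormal, s11_gamma_std, s22_gamma_std, s12_gamma_std.
  reflexivity.
Qed.

Lemma Rabs_cross_cov_le cx cp th ph : Rabs cp <= cx -> Rabs (cross_cov cx cp th ph) <= cx / 2.
Proof.
  intros H. unfold cross_cov, Rdiv. rewrite Rabs_mult, (Rabs_right (/ 2)) by lra.
  cut (Rabs (cx * (cos th * cos ph) - cp * (sin th * sin ph)) <= cx); [lra |].
  assert (Hsq : forall x, Rabs x * Rabs x = x * x)
    by (intros x; rewrite <- Rabs_mult; apply Rabs_right; nra).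
  assert (Hcs : Rabs (cos th * cos ph) + Rabs (sin th * sin ph) <= 1).
  { pose proof (sin2_cos2 th). pose proof (sin2_cos2 ph). unfold Rsqr in *.
    rewrite !Rabs_mult, <- (Hsq (cos th)), <- (Hsq (sin th)), <- (Hsq (cos ph)),
      <- (Hsq (sin ph)) in *.
    pose proof (Rle_0_sqr (Rabs (cos th) - Rabs (cos ph))).
    pose proof (Rle_0_sqr (Rabs (sin th) - Rabs (sin ph))). unfold Rsqr in *. nra. }
  eapply Rle_trans; [apply Rabs_triang |]. rewrite Rabs_Ropp, !(Rabs_mult cx), !(Rabs_mult cp).
  assert (Hcx : 0 <= cx) by (pose proof (Rabs_pos cp); lra).
  rewrite (Rabs_right cx) by lra.
  pose proof (Rabs_pos (cos th * cos ph)). pose proof (Rabs_pos (sin th * sin ph)).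
  nra.
Qed.

Lemma atan_ratio_le a b c c0 : Rabs c <= c0 -> c0 * c0 < a * b ->
  atan (Rabs c / sqrt (a * b - c * c)) <= atan (c0 / sqrt (a * b - c0 * c0)).
Proof.
  intros Hc H0.
  assert (Hcc : c * c <= c0 * c0).
  { rewrite <- (Rabs_right (c * c)), Rabs_mult by nra. pose proof (Rabs_pos c). nra. }
  assert (S0 : 0 < sqrt (a * b - c0 * c0)) by (apply sqrt_lt_R0; lra).
  assert (S1 : sqrt (a * b - c0 * c0) <= sqrt (a * b - c * c)) by (apply sqrt_le_1_alt; lra).
  assert (L : Rabs c / sqrt (a * b - c * c) <= c0 / sqrt (a * b - c0 * c0)).
  { unfold Rdiv. apply Rmult_le_compat; auto using Rabs_pos.
    - left; apply Rinv_0_lt_compat; lra.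
    - apply Rinv_le_contravar; lra. }
  destruct L as [L | ->]; [left; now apply atan_increasing | apply Rle_refl].
Qed.

Lemma ratio_half a b c : 0 < a * b - c * c ->
  c / 2 / sqrt (a / 2 * (b / 2) - c / 2 * (c / 2)) = c / sqrt (a * b - c * c).
Proof.
  intros H.
  replace (a / 2 * (b / 2) - c / 2 * (c / 2)) with ((a * b - c * c) / (2 * 2)) by field.
  rewrite sqrt_div_alt, sqrt_square by lra.
  pose proof (sqrt_lt_R0 _ H). field. lra.
Qed.

Lemma is_integral_R2_Qintegrand_gamma_std la lb cx cp th ph :
  0 < la -> Rabs cp <= cx -> cx * cx < la * lb ->
  is_integral_R2 (Qintegrand (gamma_std la lb cx cp) th ph)
    (2 / PI * atan (Rabs (cross_cov cx cp th ph) /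
                    sqrt (la / 2 * (lb / 2) - cross_cov cx cp th ph * cross_cov cx cp th ph))).
Proof.
  intros Hla Hc H. rewrite Qintegrand_gamma_std. apply is_integral_R2_binormal_Q; [lra |].
  pose proof (Rabs_cross_cov_le cx cp th ph Hc). set (c := cross_cov cx cp th ph) in *.
  rewrite <- (Rabs_right (c * c)), Rabs_mult by nra. pose proof (Rabs_pos c). nra.
Qed.

Lemma is_Q_gamma_std la lb cx cp :
  1 <= la -> 1 <= lb -> Rabs cp <= cx -> cx * cx < la * lb ->
  is_Q (gamma_std la lb cx cp) (2 / PI * atan (cx / sqrt (la * lb - cx * cx)))
  /\ is_integral_R2 (Qintegrand (gamma_std la lb cx cp) 0 0)
       (2 / PI * atan (cx / sqrt (la * lb - cx * cx))).
Proof.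
  intros Hla Hlb Hc H.
  assert (Hcx : 0 <= cx) by (pose proof (Rabs_pos cp); lra).
  assert (Hopt := is_integral_R2_Qintegrand_gamma_std la lb cx cp 0 0 ltac:(lra) Hc H).
  replace (cross_cov cx cp 0 0) with (cx / 2) in Hopt
    by (unfold cross_cov; rewrite cos_0, sin_0; field).
  rewrite Rabs_right, ratio_half in Hopt by lra.
  split; [split | exact Hopt].
  - intros I [th [ph HI]].
    rewrite (is_integral_R2_unique _ _ _ HI
      (is_integral_R2_Qintegrand_gamma_std la lb cx cp th ph ltac:(lra) Hc H)).
    rewrite <- ratio_half by lra.
    apply Rmult_le_compat_l; [apply Rdiv_le_0_compat; pose proof PI_RGT_0; lra |].
    apply atan_ratio_le; [now apply Rabs_cross_cov_le | lra].
  - intros b Hb. apply Hb. now exists 0, 0.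
Qed.

Lemma cosh_sqr_sub_sinh_sqr x : cosh x * cosh x - sinh x * sinh x = 1.
Proof.
  unfold cosh, sinh. transitivity (exp x * exp (- x)); [field |].
  rewrite <- exp_plus, Rplus_opp_r. apply exp_0.
Qed.

Lemma one_le_cosh x : 1 <= cosh x.
Proof.
  pose proof (cosh_sqr_sub_sinh_sqr x). unfold cosh in *. pose proof (exp_add_exp_opp_pos x). nra.
Qed.

Lemma sinh_nonneg x : 0 <= x -> 0 <= sinh x.
Proof. intros [Hx | <-]; [rewrite <- sinh_0; left; now apply sinh_lt | rewrite sinh_0; lra]. Qed.

Theorem mainTheorem4 :
  (forall la lb cx cp : R,
     1 <= la -> 1 <= lb -> Rabs cp <= cx -> cx * cx < la * lb ->
     is_Q (gamma_std la lb cx cp) (2 / PI * atan (cx / sqrt (la * lb - cx * cx)))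
     /\ is_integral_R2 (Qintegrand (gamma_std la lb cx cp) 0 0)
          (2 / PI * atan (cx / sqrt (la * lb - cx * cx))))
  /\
  (forall r : R, 0 <= r ->
     is_Q (gamma_std (cosh (2 * r)) (cosh (2 * r)) (sinh (2 * r)) (sinh (2 * r)))
          (2 / PI * atan (sinh (2 * r)))).
Proof.
  split; [exact is_Q_gamma_std |].
  intros r Hr.
  assert (Hsh : 0 <= sinh (2 * r)) by (apply sinh_nonneg; lra).
  assert (Hdet := cosh_sqr_sub_sinh_sqr (2 * r)).
  destruct (is_Q_gamma_std (cosh (2 * r)) (cosh (2 * r)) (sinh (2 * r)) (sinh (2 * r)))
    as [HQ _]; try apply one_le_cosh.
  - rewrite Rabs_right; lra.
  - lra.
  - now rewrite Hdet, sqrt_1, Rdiv_1_r in HQ.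
Qed.
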